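(* Let $k,n\ge1$, let $M=\Gamma(\mathbb Z\,\overrightarrow{\times}\,G,(k,0))$ with $G$ a Dedekind $\sigma$-complete $\ell$-group (a $\mathrm{Rad}$-Dedekind $\sigma$-complete $k$-perfect MV-algebra), let $x$ be an $n$-dimensional observable on $M$ and $F=F_x$. Let $i$ be the least integer in $\{1,\ldots,k\}$ such that $T_i\neq\emptyset$. Then $T_i$ has only finitely many characteristic points.
   Context: $\mathbb Z\,\overrightarrow{\times}\,G$ is $\mathbb Z\times G$ with lexicographic order ($(a,g)\le(b,h)$ iff $a<b$ or ($a=b$ and $g\le h$)); $\Gamma(K,v)=([0,v];\oplus,',0,v)$ with $a\oplus b=(a+b)\wedge v$, $a'=v-a$. Partial addition on $M$: $a+b$ defined iff the group sum is $\le(k,0)$. Summable sequence: every finite subfamily has a sum in $M$; its sum is the supremum of finite partial sums. An $n$-dimensional observable is $x:\mathcal B(\mathbb R^n)\to M$ with $x(\mathbb R^n)=1$ and, for pairwise disjoint Borel $A_m$, $(x(A_m))_m$ summable with $x(\bigcup A_m)=\sum_m x(A_m)$. $F_x(s_1,\ldots,s_n)=x((-\infty,s_1)\times\cdots\times(-\infty,s_n))$. For $j=0,\ldots,k$, $M_j=\{(j,g)\in M\}$ and $T_j=\{\mathbf s\in\mathbb R^n\colon F(\mathbf s)\in M_j\}$. For $i\ge1$ and $\mathbf s=(s_1,\ldots,s_n)\in T_i$, $\pi^i_j(\mathbf s)=\inf\{r\in\mathbb R\colon(s_1,\ldots,s_{j-1},r,s_{j+1},\ldots,s_n)\in T_i\}$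 and $\pi_i(\mathbf s)=(\pi^i_1(\mathbf s),\ldots,\pi^i_n(\mathbf s))$; the characteristic points of $T_i$ are the points $\pi_i(\mathbf s)$, $\mathbf s\in T_i$. *)

From HB Require Import structures.
From mathcomp Require Import all_boot all_order all_algebra.
From mathcomp Require Import all_classical all_reals all_analysis.
Set Implicit Arguments. Unset Strict Implicit. Unset Printing Implicit Defensive.
Import Order.TTheory GRing.Theory Num.Theory.
Local Open Scope classical_set_scope.
Local Open Scope ring_scope.

Section LGroup.
Variables (G : zmodType) (le : rel G).

Definition is_lgroup : Prop :=
  [/\ [/\ (forall a, le a a),
      (forall a b, le a b -> le b a -> a = b) &
      (forall a b c, le a b -> le b c -> le a c)],
      (forall a b c, le a b -> le (a + c) (b + c)),
      (forall a b, exists s, [/\ le a s, le b s &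
          forall u, le a u -> le b u -> le s u]) &
      (forall a b, exists t, [/\ le t a, le t b &
          forall u, le u a -> le u b -> le u t])].

Definition dedekind_sigma_complete : Prop :=
  forall u : nat -> G, (exists b, forall m, le (u m) b) ->
    exists s, (forall m, le (u m) s) /\
              (forall b, (forall m, le (u m) b) -> le s b).

Definition is_dsc_lgroup : Prop := is_lgroup /\ dedekind_sigma_complete.

Definition lexle (p q : int * G) : Prop :=
  (p.1 < q.1)%R \/ (p.1 = q.1 /\ le p.2 q.2).

(* M = Gamma(Z lex G, (k,0)) as a subset of Z x G *)
Definition inM (k : nat) (p : int * G) : Prop :=
  lexle (0, 0) p /\ lexle p (k%:Z, 0).

Definition is_supM (k : nat) (P : set (int * G)) (s : int * G) : Prop :=
  [/\ inM k s, (forall p, P p -> lexle p s) &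
      (forall b, inM k b -> (forall p, P p -> lexle p b) -> lexle s b)].

(* every finite subfamily has a sum in M (partial addition defined) *)
Definition summableM (k : nat) (y : nat -> int * G) : Prop :=
  forall S : seq nat, uniq S -> inM k (\sum_(m <- S) y m).

Definition sumM (k : nat) (y : nat -> int * G) (s : int * G) : Prop :=
  is_supM k [set \sum_(m < N) y m | N in [set: nat]] s.

End LGroup.

Section Obs.
Variables (R : realType) (G : zmodType) (le : rel G) (k n : nat).

Definition borel_n : set (set 'rV[R]_n) := <<s [set U : set 'rV[R]_n | @open 'rV[R^o]_n U] >>.

Definition observable (x : set 'rV[R]_n -> int * G) : Prop :=
  [/\ (forall A, borel_n A -> inM le k (x A)),
      x setT = (k%:Z, 0) &
      (forall A : nat -> set 'rV[R]_n, (forall m, borel_n (A m)) ->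
         (forall m1 m2, m1 <> m2 -> A m1 `&` A m2 = set0) ->
         summableM le k (x \o A) /\ sumM le k (x \o A) (x (\bigcup_m A m)))].

Definition Fx (x : set 'rV[R]_n -> int * G) (s : 'rV[R]_n) : int * G :=
  x [set t : 'rV[R]_n | forall j, t ord0 j < s ord0 j].

Definition Tset (x : set 'rV[R]_n -> int * G) (j : nat) : set 'rV[R]_n :=
  [set s | inM le k (Fx x s) /\ (Fx x s).1 = j%:Z].

Definition replace_coord (s : 'rV[R]_n) (j : 'I_n) (r : R) : 'rV[R]_n :=
  \row_l (if l == j then r else s ord0 l).

Definition pi_ij (x : set 'rV[R]_n -> int * G) (i : nat) (j : 'I_n)
    (s : 'rV[R]_n) : \bar R :=
  ereal_inf [set r%:E | r in [set r : R | Tset x i (replace_coord s j r)]].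

Definition pi_i (x : set 'rV[R]_n -> int * G) (i : nat) (s : 'rV[R]_n)
    : 'rV[\bar R]_n :=
  \row_j pi_ij x i j s.

Definition char_points (x : set 'rV[R]_n -> int * G) (i : nat)
    : set 'rV[\bar R]_n :=
  [set pi_i x i s | s in Tset x i].

End Obs.

(* Fix a coordinate j.  If pi^i_j(s) = v is finite, then moving the j-th
   coordinate of s from just below v to a point of T_i just above it turns the
   integer part of F from a value different from i into i.  By additivity of x,
   the thin slab between the two lower orthants therefore has a mass with
   integer part at least 1.  Slabs around distinct values are disjoint once
   they are thin enough, and the integer parts of the masses of disjoint Borel
   sets add up to at most k.  Hence every coordinate of a characteristic point
   takes at most k finite values besides -oo and +oo. *)

From HB Require Import structures.
From mathcomp Require Import all_boot all_order all_algebra.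
From mathcomp Require Import all_classical all_reals all_analysis.
From mathcomp Require Import lra zify finmap.
Set Implicit Arguments.
Unset Strict Implicit.
Unset Printing Implicit Defensive.
Import Order.TTheory GRing.Theory Num.Theory.
Local Open Scope classical_set_scope.
Local Open Scope ring_scope.

Definition orthant {R : realType} {n : nat} (s : 'rV[R]_n) : set 'rV[R]_n :=
  [set t | forall j, t ord0 j < s ord0 j].

Lemma open_orthant {R : realType} {n : nat} (s : 'rV[R]_n) :
  @open 'rV[R^o]_n (orthant s).
Proof.
rewrite openE => u us.
apply: (@filter_forall _ _ (fun j (t : 'rV[R^o]_n) => t ord0 j < s ord0 j) _
  (nbhs_filter u)) => j.
apply: (@coord_continuous R^o 1 n ord0 j u [set r : R^o | r < s ord0 j]).
exact: lt_nbhsl (us j).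
Qed.

Lemma borel_orthant {R : realType} {n : nat} (s : 'rV[R]_n) :
  borel_n (orthant s).
Proof. by apply: sub_gen_smallest; exact: open_orthant. Qed.

Lemma borel0 {R : realType} {n : nat} : borel_n (set0 : set 'rV[R]_n).
Proof. exact: sigma_algebra0. Qed.

Lemma borel_setD {R : realType} {n : nat} (A B : set 'rV[R]_n) :
  borel_n A -> borel_n B -> borel_n (A `\` B).
Proof.
exact: (@measurableD _ (g_sigma_algebraType [set U : set 'rV[R^o]_n | open U])).
Qed.

Section ReplaceCoord.
Variables (R : realType) (n : nat) (s : 'rV[R]_n) (j : 'I_n).

Lemma subset_orthant_replace_coord (r r' : R) : r <= r' ->
  orthant (replace_coord s j r) `<=` orthant (replace_coord s j r').
Proof.
move=> rr' t t_lt l; have := t_lt l; rewrite !mxE.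
by case: ifP => // _ /lt_le_trans; apply.
Qed.

Lemma orthant_replace_coordD_bounds (r r' : R) (t : 'rV[R]_n) :
  (orthant (replace_coord s j r') `\` orthant (replace_coord s j r)) t ->
  r <= t ord0 j < r'.
Proof.
move=> [t_lt' t_nlt]; have := t_lt' j; rewrite mxE eqxx => -> /[!andbT].
rewrite leNgt; apply/negP => tr; apply: t_nlt => l; rewrite mxE.
by case: eqVneq => [->//|ne]; have := t_lt' l; rewrite mxE (negbTE ne).
Qed.

End ReplaceCoord.

Lemma inj_sep_dist (R : realDomainType) (f : nat -> R) (N : nat) :
  injective f -> exists2 d, 0 < d &
    forall a b, (a < N)%N -> (b < N)%N -> a != b -> d <= `|f a - f b|.
Proof.
move=> finj.
exists (\big[Order.min/1]_(p : 'I_N * 'I_N | p.1 != p.2) `|f p.1 - f p.2|).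
  apply: lt_bigmin => // p ne; rewrite normr_gt0 subr_eq0.
  by apply: contra ne => /eqP /finj /val_inj ->.
move=> a b aN bN ab.
exact: (@bigmin_le_cond _ _ _ _ (Ordinal aN, Ordinal bN)).
Qed.

Lemma fst_sum (G : zmodType) (I : Type) (r : seq I) (F : I -> int * G) :
  (\sum_(i <- r) F i).1 = \sum_(i <- r) (F i).1.
Proof. exact: (big_morph fst (fun _ _ => erefl) erefl). Qed.

Section LexOrder.
Variables (G : zmodType) (le : rel G) (k : nat).

Lemma lexle_fst (p q : int * G) : lexle le p q -> p.1 <= q.1.
Proof. by case=> [/ltW|[->]]. Qed.

Lemma inM_fst (p : int * G) : inM le k p -> 0 <= p.1 <= k%:Z.
Proof. by case=> /lexle_fst /= -> /lexle_fst /= ->. Qed.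

Hypothesis hG : is_lgroup le.

Lemma lexle_refl (p : int * G) : lexle le p p.
Proof. by case: hG => -[refl _ _] _ _ _; right. Qed.

Lemma lexle_anti (p q : int * G) : lexle le p q -> lexle le q p -> p = q.
Proof.
case: hG => -[_ anti _] _ _ _; case: p q => [a g] [b h].
rewrite /lexle /= => -[ab|[ab gh]] [ba|[ba hg]].
- by move: (lt_trans ab ba); rewrite ltxx.
- by move: ab; rewrite ba ltxx.
- by move: ba; rewrite ab ltxx.
- by rewrite ab (anti _ _ gh hg).
Qed.

Lemma lexle_add2r (r p q : int * G) : lexle le p q -> lexle le (p + r) (q + r).
Proof.
case: hG => _ add _ _; case=> [pq|[pq pq2]]; first by left; rewrite ltrD2r.
by right; split; [rewrite /= pq | exact: add].
Qed.

Lemma sumM_eq (y : nat -> int * G) (s b : int * G) :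
  sumM le k y s -> inM le k b -> (exists N, \sum_(m < N) y m = b) ->
  (forall N, lexle le (\sum_(m < N) y m) b) -> s = b.
Proof.
case=> _ ub least hb [N sumN] bub.
apply: lexle_anti; first by apply: least => // _ [M _ <-].
by apply: ub; exists N.
Qed.

End LexOrder.

Section Observable.
Variables (R : realType) (G : zmodType) (le : rel G) (k n : nat).
Variable x : set 'rV[R]_n -> int * G.
Hypotheses (hG : is_lgroup le) (hx : observable le k x).

Lemma observable_inM (A : set 'rV[R]_n) : borel_n A -> inM le k (x A).
Proof. by case: hx => inMx _ _; exact: inMx. Qed.

Lemma observable0 : x set0 = 0.
Proof.
(* The sum x set0 of the constant family bounds its partial sum 2 x set0. *)
case: hx => _ _ /(_ (fun=> set0) (fun=> borel0)) [|_ [_ ub _]].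
  by move=> *; rewrite setI0.
have := ub _ (ex_intro2 _ _ 2%N I erefl).
rewrite bigcup0 // big_ord_recr big_ord1 /= => /(lexle_add2r hG (- x set0)).
rewrite addrK subrr => x0_le0.
by apply: (lexle_anti hG x0_le0); case: (observable_inM borel0).
Qed.

Lemma observableU (A B : set 'rV[R]_n) : borel_n A -> borel_n B ->
  A `&` B = set0 -> x (A `|` B) = x A + x B.
Proof.
move=> bA bB AB0; pose C m := nth set0 [:: A; B] m.
have bC m : borel_n (C m).
  by case: m => [|[|m]] //; rewrite /C /= nth_nil; exact: borel0.
have dC m1 m2 : m1 <> m2 -> C m1 `&` C m2 = set0.
  case: m1 m2 => [|[|m1]] [|[|m2]] ne;
    by rewrite /C /= ?nth_nil ?set0I ?setI0 // 1?setIC.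
have UC : \bigcup_m C m = A `|` B.
  apply/seteqP; split=> t.
  - by case=> -[|[|m]] _ Ct; [left | right | rewrite /C /= nth_nil in Ct].
  - by case=> [At|Bt]; [exists 0%N | exists 1%N].
case: hx => _ _ /(_ C bC dC) [sC]; rewrite UC => sumC.
have inMb : inM le k (x A + x B).
  by have := sC [:: 0%N; 1%N] erefl; rewrite !big_cons big_nil addr0.
apply: (sumM_eq hG sumC inMb).
  by exists 2%N; rewrite !big_ord_recl big_ord0 addr0.
case=> [|[|N]].
- by rewrite big_ord0; case: inMb.
- rewrite big_ord1.
  have := lexle_add2r hG (x A) (proj1 (observable_inM bB)).
  by rewrite add0r addrC.
- rewrite !big_ord_recl big1 ?addr0 => [|i _]; first exact: lexle_refl.
  by rewrite /= /C /= nth_nil observable0.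
Qed.

Lemma observableD (A B : set 'rV[R]_n) : borel_n A -> borel_n B ->
  A `<=` B -> x (B `\` A) = x B - x A.
Proof.
move=> bA bB AB; rewrite -{2}(setDUK AB) observableU ?setDIK //.
  by rewrite [x A + _]addrC addrK.
exact: borel_setD.
Qed.

Lemma Tset_fstE (i : nat) (s : 'rV[R]_n) :
  Tset le k x i s <-> (x (orthant s)).1 = i%:Z.
Proof.
by split=> [[]//|]; split=> //; exact: observable_inM (borel_orthant s).
Qed.

Lemma observable_count (C : nat -> set 'rV[R]_n) (N : nat) :
  (forall m, (m < N)%N -> borel_n (C m)) ->
  (forall m1 m2, (m1 < N)%N -> (m2 < N)%N -> m1 != m2 ->
     C m1 `&` C m2 = set0) ->
  (forall m, (m < N)%N -> 1 <= (x (C m)).1) ->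
  (N <= k)%N.
Proof.
move=> bC dC C1; pose D m := if (m < N)%N then C m else set0.
have bD m : borel_n (D m) by rewrite /D; case: ifP => [/bC //|_]; exact: borel0.
have dD m1 m2 : m1 <> m2 -> D m1 `&` D m2 = set0.
  rewrite /D; case: ifP => m1N; case: ifP => m2N ne; rewrite ?set0I ?setI0 //.
  by apply: dC => //; apply/eqP.
case: hx => _ _ /(_ D bD dD) [/(_ _ (iota_uniq 0 (N - 0)))/inM_fst + _].
rewrite fst_sum big_mkord -lez_nat => /andP[_]; apply: le_trans.
have -> : N%:Z = \sum_(m < N) 1 by rewrite sumr_const card_ord natz.
by apply: ler_sum => m _; rewrite /D /= ltn_ord; exact: C1.
Qed.

Lemma pi_ij_slab (i : nat) (j : 'I_n) (s : 'rV[R]_n) (v e : R) :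
  pi_ij le k x i j s = v%:E -> 0 < e ->
  exists B, [/\ borel_n B, 1 <= (x B).1 & forall t, B t -> `|t ord0 j - v| < e].
Proof.
set S := [set r | Tset le k x i (replace_coord s j r)] => piv e0.
have v_le r : S r -> v <= r.
  by move=> Sr; rewrite -lee_fin -piv; apply: ereal_inf_lbound; exists r.
have [_ [r' Sr' <-]] : exists2 y, (EFin @` S) y & (y < (v + e)%:E)%E.
  by apply: ereal_inf_lt; rewrite [ereal_inf _]piv lte_fin ltrDl.
rewrite lte_fin => r'_lt; have vr' := v_le r' Sr'.
pose r := v - e / 2.
have rr' : r <= r' by rewrite /r; lra.
have nSr : ~ S r by move=> /v_le; rewrite /r; lra.
pose O r := orthant (replace_coord s j r).
have /Tset_fstE Or'_i := Sr'.
have Or_i : (x (O r)).1 != i%:Z by apply/eqP => /Tset_fstE.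
have bB : borel_n (O r' `\` O r).
  exact: borel_setD (borel_orthant _) (borel_orthant _).
exists (O r' `\` O r); split => //.
- have /andP[+ _] := inM_fst (observable_inM bB).
  rewrite (observableD (borel_orthant _) (borel_orthant _)
                       (subset_orthant_replace_coord rr')) /=.
  by rewrite Or'_i; move: Or_i; rewrite /O; lia.
- by move=> t /orthant_replace_coordD_bounds; rewrite ltr_distlC /r; lra.
Qed.

Lemma finite_pi_ij_values (i : nat) (j : 'I_n) :
  finite_set [set v : R | exists s, pi_ij le k x i j s = v%:E].
Proof.
apply: contrapT => /infiniteP V_inf.
have [f] := @ppcard_leP _ R^o _ _ V_inf.
have finj : injective f by move=> a b; apply: inj; exact: in_setT.
have [d d0 d_le] := inj_sep_dist k.+1 finj.
have slab m : exists B, [/\ borel_n B, 1 <= (x B).1 &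
    forall t, B t -> `|t ord0 j - f m| < d / 2].
  have [s fs] : exists s, pi_ij le k x i j s = (f m)%:E.
    exact: (@funS _ _ _ _ f m I).
  by apply: pi_ij_slab fs _; lra.
have [C C_slab] := choice slab.
suff : (k.+1 <= k)%N by rewrite ltnn.
apply: (@observable_count C) => [m _|m1 m2 m1k m2k ne|m _];
  try by case: (C_slab m).
apply/seteqP; split=> // t [C1t C2t]; exfalso.
have := d_le _ _ m1k m2k ne; have := ler_distD (t ord0 j) (f m1) (f m2).
case: (C_slab m1) (C_slab m2) => _ _ /(_ t C1t) + [_ _ /(_ t C2t)].
by rewrite (distrC (f m1) (t ord0 j)); lra.
Qed.

End Observable.

Lemma finite_set_rows (T : choiceType) (n : nat) (U : set T) :
  finite_set U -> finite_set [set v : 'rV[T]_n | forall j, U (v ord0 j)].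
Proof.
move=> /finite_fsetP[X ->].
have rows_fin :
    finite_set ((fun f : {ffun 'I_n -> X} => \row_j val (f j)) @` setT).
  exact: finite_image.
apply: sub_finite_set rows_fin => v vX; exists [ffun j => [` vX j]%fset] => //.
by apply/rowP => j; rewrite !mxE ffunE.
Qed.

Theorem lemma4p1 (R : realType) (G : zmodType) (le : rel G) (k n : nat)
  (hk : (1 <= k)%N) (hn : (1 <= n)%N) (hG : is_dsc_lgroup le)
  (x : set 'rV[R]_n -> int * G) (hx : observable le k x)
  (i : nat) (hi : (1 <= i <= k)%N) (hTi : Tset le k x i !=set0)
  (hmin : forall j : nat, (1 <= j < i)%N -> Tset le k x j = set0) :
  finite_set (char_points le k x i).
Proof.
(* Only hG.1 and hx are needed: the bound holds for every i. *)
pose V j := [set v : R | exists s, pi_ij le k x i j s = v%:E].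
pose U := EFin @` (\bigcup_(j in [set: 'I_n]) V j) `|` [set -oo%E; +oo%E].
have finU : finite_set U.
  rewrite finite_setU; split; last exact: finite_set2.
  apply: finite_image; apply: bigcup_finite => // j _.
  exact: finite_pi_ij_values hG.1 hx i j.
apply: sub_finite_set (finite_set_rows n finU) => _ [s _ <-] j; rewrite mxE.
case pis: pi_ij => [v| |]; [left | by right; right | by right; left].
by exists v => //; exists j => //; exists s.
Qed.
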